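(* Let $(X,\leqslant)$ be a finite poset. For any tree-based enforcement scheme $(T,\phi)$ with $T=(X,E)$ and every $x\in X$, we have $\phi(x)\supseteq\phi_E(x)$.
   Context: For a digraph $G$, $x\rightsquigarrow_G y$ means there is a directed path from $x$ to $y$ in $G$ (with $x\rightsquigarrow_G x$ always). A derivation out-tree for $(X,\leqslant)$ is a spanning out-tree $T=(X,E)$ (rooted tree on vertex set $X$ with arcs oriented away from the root) such that $xy\in E$ implies $y<x$; its root $r$ is the maximum element of $X$. Define $\phi_E\colon X\to2^X$ by $\phi_E(r)=\{r\}$ and, for $x\neq r$, $\phi_E(x)=\{z\in X:\exists y\in X \text{ with } yz\in E,\ x\geqslant z,\ x\not\geqslant y\}$. A tree-based enforcement scheme is a pair $(T,\phi)$ with $T$ a derivation out-tree and $\phi\colon X\to2^X$ such that for all $x\in X$: $x\in\phi(x)$; if $u\leqslant x$ then some $z\in\phi(x)$ has $z\rightsquigarrow_T u$; if $u\not\leqslant x$ then no $z\in\phi(x)$ has $z\rightsquigarrow_T u$. *)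

From mathcomp Require Import all_boot all_order.
Set Implicit Arguments. Unset Strict Implicit. Unset Printing Implicit Defensive.
Import Order.TTheory.
Local Open Scope order_scope.

(* A digraph on a finite vertex set X is given by its arc relation E : rel X
   (E x y  <->  xy is an arc).  x ~>_E y is  connect E x y  (reflexive-transitive
   closure, so x ~>_E x always). *)

Definition out_tree (X : finType) (E : rel X) (r : X) : Prop :=
  (forall y, ~~ E y r) /\
  (forall x, x != r -> exists! y, E y x) /\
  (forall x, connect E r x).

Definition derivation_out_tree d (X : finPOrderType d) (E : rel X) (r : X) : Prop :=
  out_tree E r /\ (forall x y, E x y -> y < x).

Definition phiE d (X : finPOrderType d) (E : rel X) (r : X) (x : X) : {set X} :=
  if x == r then [set r]
  else [set z | [exists y, E y z && (z <= x) && ~~ (y <= x)]].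

Definition enforcement_scheme d (X : finPOrderType d) (E : rel X) (r : X)
  (phi : X -> {set X}) : Prop :=
  derivation_out_tree E r /\
  forall x : X,
    [/\ x \in phi x,
        (forall u, u <= x -> exists2 z, z \in phi x & connect E z u) &
        (forall u, ~~ (u <= x) -> forall z, z \in phi x -> ~~ connect E z u)].

From mathcomp Require Import all_boot all_order.
Set Implicit Arguments. Unset Strict Implicit. Unset Printing Implicit Defensive.
Import Order.TTheory.
Local Open Scope order_scope.

(* Let z be in phi_E(x) through the arc yz, with y not below x.  Some w in
   phi(x) reaches z; if w <> z, the path ends with the unique in-arc of z, so
   w reaches y, which the enforcement condition forbids.  Hence z = w. *)

Lemma connect_last_arc (T : finType) (E : rel T) (w z : T) :
  connect E w z -> w != z -> exists2 y, connect E w y & E y z.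
Proof.
move=> /connectP [p Hp ->]; elim/last_ind: p Hp => [|p a _] /=.
  by rewrite eqxx.
rewrite rcons_path last_rcons => /andP [Hp Ha] _.
by exists (last w p); first by apply/connectP; exists p.
Qed.

Lemma connect_unique_parent (T : finType) (E : rel T) (y z w : T) :
  (forall y', E y' z -> y' = y) -> connect E w z -> w != z -> connect E w y.
Proof.
move=> parent_z wz nwz.
by have [y' wy' /parent_z <-] := connect_last_arc wz nwz.
Qed.

Lemma out_tree_unique_parent (X : finType) (E : rel X) (r y z : X) :
  out_tree E r -> E y z -> forall y', E y' z -> y' = y.
Proof.
move=> [no_in_r [uniq_in _]] Eyz.
have zr : z != r by apply: contraTneq Eyz => ->; apply: no_in_r.
have [p [_ p_unique]] := uniq_in z zr.
by move=> y' Ey'z; rewrite -(p_unique y' Ey'z) (p_unique y Eyz).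
Qed.

Theorem lemma3 : forall d (X : finPOrderType d) (E : rel X) (r : X)
  (phi : X -> {set X}),
  enforcement_scheme E r phi ->
  forall x : X, phiE E r x \subset phi x.
Proof.
move=> d X E r phi [[tree _] scheme] x.
have [_ reach_below no_reach_above] := scheme x.
rewrite /phiE; case: eqP => [->|_].
  by apply/subsetP => z /set1P ->; have [] := scheme r.
apply/subsetP => z; rewrite inE => /existsP [y /andP [/andP [Eyz zx] yx]].
have [w w_phi wz] := reach_below z zx.
have [<- //|nwz] := eqVneq w z.
have wy := connect_unique_parent (out_tree_unique_parent tree Eyz) wz nwz.
by move: (no_reach_above y yx w w_phi); rewrite wy.
Qed.
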